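(* Let $V\colon[-1,1]\to[0,1]$ be a smooth function with $V(-1)=V(1)=1$ and $V(0)=0$, strictly decreasing on $[-1,0]$ and strictly increasing on $[0,1]$. Let $$T^*S^2=\{(x,y,z,u,v,w)\in\mathbb{R}^6 \mid x^2+y^2+z^2=1,\ xu+yv+zw=0\},$$ and define $F=(J,H)\colon T^*S^2\to\mathbb{R}^2$ by $$J=xv-yu,\qquad H=\tfrac12(u^2+v^2+w^2)+V(z).$$ Then the image of $F$ is the epigraph $$F(T^*S^2)=\Big\{(j,h)\in\mathbb{R}^2 \;\Big|\; j\in\mathbb{R},\ h\ge \tfrac{j^2}{2}\Big\},$$ and for every $j\in\mathbb{R}$ the fiber $F^{-1}\big(j,\tfrac{j^2}{2}\big)$ is a circle.
   Context: $T^*S^2$ is realized as a submanifold of $T^*\mathbb{R}^3\cong\mathbb{R}^6$ with position coordinates $(x,y,z)$ and momentum coordinates $(u,v,w)$; $J$ is the angular momentum about the $z$-axis and $H$ is the mechanical energy of the spherical pendulum with potential $V$. *)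

From Stdlib Require Import Reals Lra.
From Coquelicot Require Import Coquelicot.
Open Scope R_scope.

Record P6 := mkP6 { px : R; py : R; pz : R; pu : R; pv : R; pw : R }.

Definition TS2 (p : P6) : Prop :=
  px p ^ 2 + py p ^ 2 + pz p ^ 2 = 1 /\
  px p * pu p + py p * pv p + pz p * pw p = 0.

Definition Jmap (p : P6) : R := px p * pv p - py p * pu p.
Definition Hmap (V : R -> R) (p : P6) : R :=
  / 2 * (pu p ^ 2 + pv p ^ 2 + pw p ^ 2) + V (pz p).

(* Smoothness of V on [-1,1]: every iterated derivative exists at each point
   of [-1,1] (V : R -> R is a smooth extension near the endpoints). *)
Definition smooth_on_m11 (V : R -> R) : Prop :=
  forall (n : nat) (x : R), -1 <= x <= 1 -> ex_derive (Derive_n V n) x.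

Definition dist6 (p q : P6) : R :=
  sqrt ((px p - px q) ^ 2 + (py p - py q) ^ 2 + (pz p - pz q) ^ 2 +
        (pu p - pu q) ^ 2 + (pv p - pv q) ^ 2 + (pw p - pw q) ^ 2).
Definition dist2 (a b : R * R) : R :=
  sqrt ((fst a - fst b) ^ 2 + (snd a - snd b) ^ 2).

Definition unit_circle (a : R * R) : Prop := fst a ^ 2 + snd a ^ 2 = 1.

Definition cont_on {A B : Type} (dA : A -> A -> R) (dB : B -> B -> R)
  (S : A -> Prop) (f : A -> B) : Prop :=
  forall x, S x -> forall eps, 0 < eps ->
    exists delta, 0 < delta /\
      forall y, S y -> dA x y < delta -> dB (f x) (f y) < eps.

Definition is_circle (S : P6 -> Prop) : Prop :=
  exists (f : P6 -> R * R) (g : R * R -> P6),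
    (forall p, S p -> unit_circle (f p)) /\
    (forall q, unit_circle q -> S (g q)) /\
    (forall p, S p -> g (f p) = p) /\
    (forall q, unit_circle q -> f (g q) = q) /\
    cont_on dist6 dist2 S f /\
    cont_on dist2 dist6 unit_circle g.

(* Writing J = x v - y u, Lagrange's identity
   (x^2 + y^2)(u^2 + v^2) = (x u + y v)^2 + J^2 together with x^2 + y^2 <= 1
   gives J^2 <= u^2 + v^2, so H - J^2/2 = w^2/2 + (u^2 + v^2 - J^2)/2 + V(z)
   is a sum of three nonnegative terms.  The bound h = j^2/2 is attained, and
   larger h are reached by adding vertical momentum w.  On the bottom fiber all
   three terms vanish: w = 0, and z = 0 since 0 is the only zero of V; the point
   then lies on the equator with momentum j (-y, x), so (x, y) parametrizes the
   fiber by the unit circle, with Lipschitz maps both ways. *)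
From Stdlib Require Import Reals Lra Psatz.
Open Scope R_scope.

Lemma cont_on_lipschitz {A B : Type} (dA : A -> A -> R) (dB : B -> B -> R)
  (S : A -> Prop) (f : A -> B) (k : R) :
  0 < k -> (forall x y, S x -> S y -> dB (f x) (f y) <= k * dA x y) ->
  cont_on dA dB S f.
Proof.
intros Hk Hlip x Sx eps Heps.
exists (eps / k); split; [apply Rdiv_lt_0_compat; lra |].
intros y Sy Hxy.
apply (Rle_lt_trans _ (k * dA x y)); [now apply Hlip |].
apply (Rmult_lt_compat_l k) in Hxy; [| lra].
now replace (k * (eps / k)) with eps in Hxy by (field; lra).
Qed.

Lemma Jmap_sqr_le (p : P6) : TS2 p -> Jmap p ^ 2 <= pu p ^ 2 + pv p ^ 2.
Proof.
destruct p as [x y z u v w]; unfold TS2, Jmap; cbn [px py pz pu pv pw].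
intros [Hsphere _].
assert (Hlagrange : (x ^ 2 + y ^ 2) * (u ^ 2 + v ^ 2)
                    = (x * u + y * v) ^ 2 + (x * v - y * u) ^ 2) by ring.
assert (Hxy : x ^ 2 + y ^ 2 <= 1) by nra.
assert ((x ^ 2 + y ^ 2) * (u ^ 2 + v ^ 2) <= u ^ 2 + v ^ 2) by nra.
pose proof (pow2_ge_0 (x * u + y * v)).
lra.
Qed.

Lemma Hmap_sub_half_Jsqr (V : R -> R) (p : P6) :
  Hmap V p - Jmap p ^ 2 / 2
  = / 2 * pw p ^ 2 + / 2 * (pu p ^ 2 + pv p ^ 2 - Jmap p ^ 2) + V (pz p).
Proof. unfold Hmap; field. Qed.

Lemma TS2_pz_bound (p : P6) : TS2 p -> -1 <= pz p <= 1.
Proof. intros [Hsphere _]; nra. Qed.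

Definition circle_proj (p : P6) : R * R := (px p, py p).

Definition circle_lift (j : R) (q : R * R) : P6 :=
  mkP6 (fst q) (snd q) 0 (- j * snd q) (j * fst q) 0.

Lemma dist2_circle_proj_le (p q : P6) :
  dist2 (circle_proj p) (circle_proj q) <= dist6 p q.
Proof.
unfold dist2, dist6, circle_proj; cbn [fst snd].
apply sqrt_le_1_alt.
pose proof (pow2_ge_0 (pz p - pz q)); pose proof (pow2_ge_0 (pu p - pu q)).
pose proof (pow2_ge_0 (pv p - pv q)); pose proof (pow2_ge_0 (pw p - pw q)).
lra.
Qed.

Lemma dist6_circle_lift (j : R) (a b : R * R) :
  dist6 (circle_lift j a) (circle_lift j b) = sqrt (1 + j ^ 2) * dist2 a b.
Proof.
unfold dist6, dist2, circle_lift; cbn [fst snd px py pz pu pv pw].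
rewrite <- sqrt_mult by (try apply Rplus_le_le_0_compat; apply pow2_ge_0 || lra).
f_equal; ring.
Qed.

Section Potential.

Variable V : R -> R.
Hypothesis V_ge0 : forall z, -1 <= z <= 1 -> 0 <= V z.
Hypothesis V_at0 : V 0 = 0.

Lemma Hmap_ge_half_Jsqr (p : P6) : TS2 p -> Jmap p ^ 2 / 2 <= Hmap V p.
Proof.
intros HT.
pose proof (Hmap_sub_half_Jsqr V p); pose proof (Jmap_sqr_le p HT).
pose proof (V_ge0 _ (TS2_pz_bound p HT)); pose proof (pow2_ge_0 (pw p)).
lra.
Qed.

Lemma JH_image_iff (j h : R) :
  (exists p : P6, TS2 p /\ Jmap p = j /\ Hmap V p = h) <-> j ^ 2 / 2 <= h.
Proof.
split.
- intros [p [HT [<- <-]]]; exact (Hmap_ge_half_Jsqr p HT).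
- intros Hh.
  exists (mkP6 1 0 0 0 j (sqrt (2 * (h - j ^ 2 / 2)))).
  unfold TS2, Jmap, Hmap; cbn [px py pz pu pv pw].
  rewrite V_at0, pow2_sqrt by lra.
  repeat split; field.
Qed.

Hypothesis V_eq0 : forall z, -1 <= z <= 1 -> V z = 0 -> z = 0.

Definition bottom_fiber (j : R) (p : P6) : Prop :=
  TS2 p /\ Jmap p = j /\ Hmap V p = j ^ 2 / 2.

Lemma circle_lift_bottom_fiber (j : R) (q : R * R) :
  unit_circle q -> bottom_fiber j (circle_lift j q).
Proof.
destruct q as [a b]; unfold unit_circle, bottom_fiber, TS2, Jmap, Hmap, circle_lift.
cbn [fst snd px py pz pu pv pw]; intros Hq; rewrite V_at0; repeat split.
- lra.
- ring.
- transitivity (j * (a ^ 2 + b ^ 2)); [ring | rewrite Hq; ring].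
- transitivity (j ^ 2 * (a ^ 2 + b ^ 2) / 2); [field | rewrite Hq; field].
Qed.

Lemma bottom_fiber_lift_proj (j : R) (p : P6) :
  bottom_fiber j p ->
  unit_circle (circle_proj p) /\ circle_lift j (circle_proj p) = p.
Proof.
intros [HT [<- HH]].
pose proof (Hmap_sub_half_Jsqr V p); pose proof (Jmap_sqr_le p HT).
pose proof (V_ge0 _ (TS2_pz_bound p HT)); pose proof (pow2_ge_0 (pw p)).
assert (Hz : pz p = 0) by (apply V_eq0; [exact (TS2_pz_bound p HT) | lra]).
destruct p as [x y z u v w].
unfold TS2, Jmap, circle_proj, circle_lift, unit_circle in *.
cbn [fst snd px py pz pu pv pw] in *; subst z.
assert (Hw : w = 0) by nra.
destruct HT as [Hequator Horth].
assert (Hxy : x ^ 2 + y ^ 2 = 1) by lra.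
(* u = x (x u + y v) - y J and v = y (x u + y v) + x J on the equator *)
split; [exact Hxy | subst w; f_equal; nra].
Qed.

Lemma bottom_fiber_is_circle (j : R) : is_circle (bottom_fiber j).
Proof.
exists circle_proj, (circle_lift j).
split; [| split; [| split; [| split; [| split]]]].
- intros p Hp; apply (bottom_fiber_lift_proj j p Hp).
- apply circle_lift_bottom_fiber.
- intros p Hp; apply (bottom_fiber_lift_proj j p Hp).
- now intros [a b].
- apply (cont_on_lipschitz _ _ _ _ 1); [lra |].
  intros p q _ _; rewrite Rmult_1_l; apply dist2_circle_proj_le.
- apply (cont_on_lipschitz _ _ _ _ (sqrt (1 + j ^ 2))).
  + apply sqrt_lt_R0; pose proof (pow2_ge_0 j); lra.
  + intros a b _ _; rewrite dist6_circle_lift; apply Rle_refl.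
Qed.

End Potential.

Lemma unimodal_eq0 (V : R -> R) (H0 : V 0 = 0)
  (Hdec : forall a b, -1 <= a -> a < b -> b <= 0 -> V b < V a)
  (Hinc : forall a b, 0 <= a -> a < b -> b <= 1 -> V a < V b) (z : R) :
  -1 <= z <= 1 -> V z = 0 -> z = 0.
Proof.
intros Hz HVz.
destruct (Rtotal_order z 0) as [Hneg | [Hzero | Hpos]]; [| exact Hzero |].
- assert (V 0 < V z) by (apply Hdec; lra); lra.
- assert (V 0 < V z) by (apply Hinc; lra); lra.
Qed.

Theorem mainTheorem1 (V : R -> R)
  (Hsmooth : smooth_on_m11 V)
  (Hrange : forall x, -1 <= x <= 1 -> 0 <= V x <= 1)
  (Hm1 : V (-1) = 1) (H1 : V 1 = 1) (H0 : V 0 = 0)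
  (Hdec : forall a b, -1 <= a -> a < b -> b <= 0 -> V b < V a)
  (Hinc : forall a b, 0 <= a -> a < b -> b <= 1 -> V a < V b) :
  (forall j h : R,
     (exists p : P6, TS2 p /\ Jmap p = j /\ Hmap V p = h) <-> j ^ 2 / 2 <= h)
  /\
  (forall j : R,
     is_circle (fun p => TS2 p /\ Jmap p = j /\ Hmap V p = j ^ 2 / 2)).
Proof.
assert (V_ge0 : forall z, -1 <= z <= 1 -> 0 <= V z) by (intros z Hz; apply Hrange, Hz).
split.
- exact (JH_image_iff V V_ge0 H0).
- exact (bottom_fiber_is_circle V V_ge0 H0 (unimodal_eq0 V H0 Hdec Hinc)).
Qed.
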